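(* Let $\langle\vec l,\vec c\rangle$ be an SS-uniformizable ladder system coloring and let $\mathbb{P}$ be a $\mathsf{stat}$-(K) poset. Then $\mathbb{P}$ forces that $\langle\vec l,\vec c\rangle$ is SS-uniformizable.
   Context: A ladder system is $\vec l=\langle l_\alpha:\alpha\in\omega_1\cap\mathrm{Lim}\rangle$ with each $l_\alpha\subseteq\alpha$ cofinal in $\alpha$ of order type $\omega$; $l_{\alpha,n}$ is the $n$-th element of $l_\alpha$ and $l_\alpha^n=\{l_{\alpha,m}:m\ge n\}$. A ladder system coloring is $\langle\vec l,\vec c\rangle$ with $\vec c=\langle c_\alpha:l_\alpha\to\omega\rangle$; it is uniformized on $S\subseteq\omega_1\cap\mathrm{Lim}$ if there is $k:S\to\omega$ with $\bigcup_{\alpha\in S}c_\alpha\restriction l_\alpha^{k(\alpha)}$ a function. It is SS-uniformizable if for every stationary $E\subseteq\omega_1$ it is uniformized on $E'\cap\mathrm{Lim}$ for some stationary $E'\subseteq E$. A poset is $\mathsf{stat}$-(K) if for every stationary $S\subseteq\omega_1$ and every $\langle p_\alpha:\alpha\in S\rangle$ there is a stationary $S'\subseteq S$ with $\{p_\alpha:\alpha\in S'\}$ linked (pairwise compatible). *)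

(* Forcing is set up via the standard (Kunen-style) forcing
   relation, written as a shallow embedding: a "forced formula" is a predicate
   on conditions [P -> Prop]. *)
From Stdlib Require Import Arith.

(* [lt] is a strict well-order on [W] of order type omega_1: uncountable,
   all proper initial segments countable. *)
Definition is_omega1 {W : Type} (lt : W -> W -> Prop) : Prop :=
  (forall a, ~ lt a a) /\
  (forall a b c, lt a b -> lt b c -> lt a c) /\
  (forall a b, lt a b \/ a = b \/ lt b a) /\
  well_founded lt /\
  (forall f : W -> nat, exists a b, a <> b /\ f a = f b) /\
  (forall a, exists g : nat -> W, forall b, lt b a -> exists n, g n = b).

Definition is_limit {W : Type} (lt : W -> W -> Prop) (a : W) : Prop :=
  (exists b, lt b a) /\ (forall b, lt b a -> exists g, lt b g /\ lt g a).

Definition unbounded {W : Type} (lt : W -> W -> Prop) (C : W -> Prop) : Prop :=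
  forall b, exists g, lt b g /\ C g.

Definition closed {W : Type} (lt : W -> W -> Prop) (C : W -> Prop) : Prop :=
  forall a, is_limit lt a ->
    (forall b, lt b a -> exists g, lt b g /\ lt g a /\ C g) -> C a.

Definition club {W : Type} (lt : W -> W -> Prop) (C : W -> Prop) : Prop :=
  unbounded lt C /\ closed lt C.

Definition stationary {W : Type} (lt : W -> W -> Prop) (E : W -> Prop) : Prop :=
  forall C, club lt C -> exists a, C a /\ E a.

(* Ladder system: l a n = l_{a,n}, the n-th element of l_a (for limit a);
   l_a = {l a n | n} is strictly increasing, below a and cofinal in a,
   hence of order type omega. *)
Definition ladder_system {W : Type} (lt : W -> W -> Prop) (l : W -> nat -> W) : Prop :=
  forall a, is_limit lt a ->
    (forall n, lt (l a n) (l a (S n))) /\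
    (forall n, lt (l a n) a) /\
    (forall b, lt b a -> exists n, lt b (l a n)).

(* A coloring c_a : l_a -> omega is encoded as c : W -> nat -> nat with
   c a n = c_a(l_{a,n}). Uniformized on S by k: the union of
   c_a restricted to l_a^{k a} (a in S) is a function. *)
Definition uniformized_on {W : Type} (l : W -> nat -> W) (c : W -> nat -> nat)
  (S : W -> Prop) (k : W -> nat) : Prop :=
  forall a b m m', S a -> S b -> k a <= m -> k b <= m' ->
    l a m = l b m' -> c a m = c b m'.

Definition SS_uniformizable {W : Type} (lt : W -> W -> Prop)
  (l : W -> nat -> W) (c : W -> nat -> nat) : Prop :=
  forall E, stationary lt E ->
    exists E', (forall a, E' a -> E a) /\ stationary lt E' /\
      exists k : W -> nat, uniformized_on l c (fun a => E' a /\ is_limit lt a) k.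

(* le q p : q is stronger than (extends) p *)
Definition poset {P : Type} (le : P -> P -> Prop) : Prop :=
  (forall p, le p p) /\ (forall p q r, le p q -> le q r -> le p r) /\
  (forall p q, le p q -> le q p -> p = q).

Definition compatible {P : Type} (le : P -> P -> Prop) (p q : P) : Prop :=
  exists r, le r p /\ le r q.

Definition stat_K {W : Type} (lt : W -> W -> Prop) {P : Type} (le : P -> P -> Prop) : Prop :=
  forall S, stationary lt S -> forall p : W -> P,
    exists S', (forall a, S' a -> S a) /\ stationary lt S' /\
      forall a b, S' a -> S' b -> compatible le (p a) (p b).

(* A P-name for a subset of a ground set T: a relation name T := T -> P -> Prop,
   i.e. the set of pairs (t, p); it is interpreted as {t | exists p in G, X t p}.
   [phi p] reads "p forces phi". *)
Definition name (P T : Type) := T -> P -> Prop.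

(* p ||- t in X  iff the set of r extending some s with X t s is dense below p *)
Definition Fin {P : Type} (le : P -> P -> Prop) {T : Type} (X : name P T) (t : T) : P -> Prop :=
  fun p => forall q, le q p -> exists r, le r q /\ exists s, X t s /\ le r s.

Definition Fprop {P : Type} (Q : Prop) : P -> Prop := fun _ => Q.

Definition Fnot {P : Type} (le : P -> P -> Prop) (phi : P -> Prop) : P -> Prop :=
  fun p => forall q, le q p -> ~ phi q.

Definition Fand {P : Type} (phi psi : P -> Prop) : P -> Prop :=
  fun p => phi p /\ psi p.

Definition Fall {P : Type} {I : Type} (phi : I -> P -> Prop) : P -> Prop :=
  fun p => forall i, phi i p.

Definition Fimp {P : Type} (le : P -> P -> Prop) (phi psi : P -> Prop) : P -> Prop :=
  Fnot le (Fand phi (Fnot le psi)).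

Definition Fex {P : Type} (le : P -> P -> Prop) {I : Type} (phi : I -> P -> Prop) : P -> Prop :=
  Fnot le (Fall (fun i => Fnot le (phi i))).

Definition Fclub {W : Type} (lt : W -> W -> Prop) {P : Type} (le : P -> P -> Prop)
  (C : name P W) : P -> Prop :=
  Fand
    (Fall (fun b => Fex le (fun g => Fand (Fprop (lt b g)) (Fin le C g))))
    (Fall (fun a => Fimp le (Fprop (is_limit lt a))
       (Fimp le
          (Fall (fun b => Fimp le (Fprop (lt b a))
             (Fex le (fun g => Fand (Fprop (lt b g /\ lt g a)) (Fin le C g)))))
          (Fin le C a)))).

Definition Fstationary {W : Type} (lt : W -> W -> Prop) {P : Type} (le : P -> P -> Prop)
  (E : name P W) : P -> Prop :=
  Fall (fun C : name P W => Fimp le (Fclub lt le C)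
    (Fex le (fun a => Fand (Fin le C a) (Fin le E a)))).

Definition Fsubset {W : Type} {P : Type} (le : P -> P -> Prop) (E' E : name P W) : P -> Prop :=
  Fall (fun a => Fimp le (Fin le E' a) (Fin le E a)).

(* K (a name for a subset of W x nat) is (the graph of) a function
   k : E' cap Lim -> omega which uniformizes <l,c> on E' cap Lim *)
Definition Funiformizes {W : Type} (lt : W -> W -> Prop) {P : Type} (le : P -> P -> Prop)
  (l : W -> nat -> W) (c : W -> nat -> nat) (E' : name P W) (K : name P (W * nat)) : P -> Prop :=
  Fand
    (Fall (fun a => Fimp le (Fand (Fin le E' a) (Fprop (is_limit lt a)))
        (Fex le (fun n => Fin le K (a, n)))))
  (Fand
    (Fall (fun a => Fall (fun n => Fall (fun n' =>
       Fimp le (Fand (Fand (Fin le E' a) (Fprop (is_limit lt a)))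
                     (Fand (Fin le K (a, n)) (Fin le K (a, n'))))
         (Fprop (n = n'))))))
    (Fall (fun a => Fall (fun b => Fall (fun n => Fall (fun n' =>
       Fall (fun m => Fall (fun m' =>
       Fimp le
         (Fand (Fand (Fin le E' a) (Fprop (is_limit lt a)))
         (Fand (Fand (Fin le E' b) (Fprop (is_limit lt b)))
         (Fand (Fand (Fin le K (a, n)) (Fin le K (b, n')))
               (Fprop (n <= m /\ n' <= m' /\ l a m = l b m')))))
         (Fprop (c a m = c b m')))))))))).

Definition F_SS_uniformizable {W : Type} (lt : W -> W -> Prop) {P : Type} (le : P -> P -> Prop)
  (l : W -> nat -> W) (c : W -> nat -> nat) : P -> Prop :=
  Fall (fun E : name P W => Fimp le (Fstationary lt le E)
    (Fex le (fun E' : name P W =>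
      Fand (Fsubset le E' E)
      (Fand (Fstationary lt le E')
        (Fex le (fun K : name P (W * nat) => Funiformizes lt le l c E' K)))))).

From Stdlib Require Import Classical IndefiniteDescription Cantor.

(* Work below a condition [p] forcing [E] stationary. The set of ordinals that some
   extension of [p] forces into [E] is stationary in the ground model, so ground
   SS-uniformizability gives a stationary [E1] inside it with a uniformizing [k];
   choosing [r a <= p] forcing [a] into [E] for [a] in [E1], the name
   [{(a, r a) : a in E1}] is forced into [E], and [k] still uniformizes on it.
   It remains to see that some [r a] has an extension forcing this name stationary.
   Otherwise every [r a] has an extension [t a] forcing a club [C a] disjoint from
   it; stat-(K) makes the [t a] pairwise compatible on a stationary [S], and, again
   by stat-(K), a forced club contains a ground club, so some [b] in [S] is forced
   into [C a] by [t a]; a common extension of [t a] and [t b] then forces [b] into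
   both [C a] and the name. *)

Lemma guarded_choice {A B : Type} (D : A -> Prop) (R : A -> B -> Prop) (b0 : B) :
  (forall a, D a -> exists b, R a b) -> exists f : A -> B, forall a, D a -> R a (f a).
Proof.
  intro H. apply (functional_choice (fun a b => D a -> R a b)). intro a.
  destruct (classic (D a)) as [Da | nDa].
  - destruct (H a Da) as [b Hb]. exists b. auto.
  - exists b0. tauto.
Qed.

Lemma wf_minimal {W : Type} (lt : W -> W -> Prop) : well_founded lt ->
  forall (U : W -> Prop) y, U y -> exists m, U m /\ forall z, lt z m -> ~ U z.
Proof.
  intros wf U y. induction y as [y IH] using (well_founded_ind wf). intro Uy.
  destruct (classic (exists z, lt z y /\ U z)) as [[z [ltzy Uz]] | H].
  - exact (IH z ltzy Uz).
  - exists y. split; [exact Uy |]. intros z ltzy Uz. apply H. eauto.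
Qed.

Section Omega1.

Context {W : Type} (lt : W -> W -> Prop).
Hypothesis Hom : is_omega1 lt.

Lemma omega1_trans a b c : lt a b -> lt b c -> lt a c.
Proof. apply Hom. Qed.

Lemma omega1_trichotomy a b : lt a b \/ a = b \/ lt b a.
Proof. apply Hom. Qed.

Lemma omega1_not_countable (f : nat -> W) : exists y, forall n, f n <> y.
Proof.
  destruct Hom as (_ & _ & _ & _ & unc & _).
  apply NNPP. intro Hsurj.
  destruct (functional_choice (fun y n => f n = y)) as [s Hs].
  { intro y. apply NNPP. intro Hy. apply Hsurj. exists y. intros n Hn. apply Hy. eauto. }
  destruct (unc s) as [a [b [neq_ab eq_s]]].
  apply neq_ab. rewrite <- (Hs a), <- (Hs b), eq_s. reflexivity.
Qed.

(* The initial segments below the [g n] are countable, so a sequence with no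
   upper bound would enumerate [W]. *)
Lemma omega1_countable_bounded (g : nat -> W) : exists b, forall n, lt (g n) b.
Proof.
  destruct Hom as (_ & _ & _ & _ & _ & enum).
  destruct (functional_choice (fun n (e : nat -> W) => forall b, lt b (g n) -> exists m, e m = b))
    as [e He].
  { intro n. apply enum. }
  set (f k := let '(i, m) := of_nat k in
              match m with 0 => g i | S m' => e i m' end).
  destruct (omega1_not_countable f) as [y Hy]. exists y. intro n.
  destruct (omega1_trichotomy (g n) y) as [H | [H | H]]; [exact H | exfalso ..].
  - apply (Hy (to_nat (n, 0))). unfold f. rewrite cancel_of_to. exact H.
  - destruct (He n y H) as [m Hm].
    apply (Hy (to_nat (n, S m))). unfold f. rewrite cancel_of_to. exact Hm.
Qed.

Lemma omega1_no_max x : exists y, lt x y.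
Proof.
  destruct (omega1_countable_bounded (fun _ => x)) as [b Hb]. exists b. exact (Hb 0).
Qed.

Lemma omega1_sup (x : nat -> W) : (forall n, lt (x n) (x (S n))) ->
  exists d, (forall n, lt (x n) d) /\ (forall b, lt b d -> exists n, lt b (x n)) /\
            is_limit lt d.
Proof.
  intro Hx. destruct Hom as (_ & _ & _ & wf & _).
  destruct (omega1_countable_bounded x) as [b0 Hb0].
  destruct (wf_minimal lt wf (fun d => forall n, lt (x n) d) b0 Hb0) as [d [Hd Hmin]].
  assert (Hcof : forall b, lt b d -> exists n, lt b (x n)).
  { intros b ltbd. destruct (not_all_ex_not _ _ (Hmin b ltbd)) as [n Hn]. exists (S n).
    destruct (omega1_trichotomy (x n) b) as [H | [<- | H]];
      [contradiction | apply Hx | eauto using omega1_trans]. }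
  exists d. repeat split; [exact Hd | exact Hcof | exists (x 0); apply Hd |].
  intros b ltbd. destruct (Hcof b ltbd) as [n Hn]. exists (x n). auto.
Qed.

Lemma club_tail b : club lt (fun g => lt b g).
Proof.
  split.
  - intro a. destruct (omega1_no_max b) as [y Hy]. destruct (omega1_no_max a) as [z Hz].
    destruct (omega1_trichotomy y z) as [H | [<- | H]]; eauto using omega1_trans.
  - intros a [[e lt_ea] _] Hcl. destruct (Hcl e lt_ea) as [g [_ [lt_ga Hg]]].
    eauto using omega1_trans.
Qed.

Lemma stationary_unbounded S : stationary lt S -> forall b, exists g, lt b g /\ S g.
Proof. intros HS b. exact (HS _ (club_tail b)). Qed.

Lemma omega1_inhabited : inhabited W.
Proof.
  destruct Hom as (_ & _ & _ & _ & unc & _). destruct (unc (fun _ => 0)) as [a _].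
  exact (inhabits a).
Qed.

Lemma stationary_nonempty S : stationary lt S -> exists a, S a.
Proof.
  intro HS. destruct omega1_inhabited as [b].
  destruct (stationary_unbounded S HS b) as [a [_ Sa]]. eauto.
Qed.

Lemma stationary_full : stationary lt (fun _ => True).
Proof.
  intros C [HC _]. destruct omega1_inhabited as [b]. destruct (HC b) as [g [_ Cg]]. eauto.
Qed.

Lemma club_of_closure_points (good : W -> W -> Prop) :
  (forall b, exists d, good b d) ->
  (forall b d, good b d -> lt b d) ->
  (forall b d d', good b d -> lt d d' -> good b d') ->
  (forall b b' d, good b d -> lt b' b -> good b' d) ->
  club lt (fun d => is_limit lt d /\ forall b, lt b d -> good b d).
Proof.
  intros Hex Hlt Hright Hleft.
  destruct (functional_choice good Hex) as [h Hh]. split.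
  - intro b. set (x n := Nat.iter n h b).
    assert (Hx : forall n, good (x n) (x (S n))) by (intro n; apply Hh).
    destruct (omega1_sup x (fun n => Hlt _ _ (Hx n))) as [d [Hub [Hcof Hlim]]].
    exists d. split; [exact (Hub 0) | split; [exact Hlim |]].
    intros b' ltb'd. destruct (Hcof b' ltb'd) as [n Hn].
    exact (Hleft _ _ _ (Hright _ _ _ (Hx n) (Hub (S n))) Hn).
  - intros a Hlim Hcl. split; [exact Hlim |]. intros b ltba.
    destruct (Hcl b ltba) as [g [ltbg [ltga [_ Hg]]]]. exact (Hright _ _ _ (Hg b ltbg) ltga).
Qed.
End Omega1.
Section Forcing.

Context {P : Type} (le : P -> P -> Prop).
Hypothesis Hp : poset le.

Lemma poset_refl p : le p p.
Proof. apply Hp. Qed.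

Lemma poset_trans p q r : le p q -> le q r -> le p r.
Proof. apply Hp. Qed.

Lemma Fnot_down (X : P -> Prop) p q : Fnot le X p -> le q p -> Fnot le X q.
Proof. intros H leqp r lerq. apply H. eauto using poset_trans. Qed.

Lemma Fin_down {T} (X : name P T) t p q : Fin le X t p -> le q p -> Fin le X t q.
Proof. intros H leqp r lerq. apply H. eauto using poset_trans. Qed.

Lemma Fstationary_down {W} (lt : W -> W -> Prop) (E : name P W) p q :
  Fstationary lt le E p -> le q p -> Fstationary lt le E q.
Proof. intros H leqp C. exact (Fnot_down _ _ _ (H C) leqp). Qed.

Lemma Fin_stable {T} (X : name P T) t p :
  (forall q, le q p -> ~ Fnot le (Fin le X t) q) -> Fin le X t p.
Proof.
  intros H q leqp. apply NNPP. intro Hno. apply (H q leqp). intros q' leq'q Hin.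
  destruct (Hin q' (poset_refl q')) as [r [lerq' Hr]].
  apply Hno. exists r. eauto using poset_trans.
Qed.

Lemma Fex_intro {I} (X : I -> P -> Prop) p :
  (forall q, le q p -> exists i r, le r q /\ X i r) -> Fex le X p.
Proof. intros H q leqp Hall. destruct (H q leqp) as [i [r [lerq Hr]]]. exact (Hall i r lerq Hr). Qed.

Lemma Fex_elim {I} (X : I -> P -> Prop) p : Fex le X p -> exists i q, le q p /\ X i q.
Proof.
  intro H. apply NNPP. intro Hno. apply (H p (poset_refl p)). intros i q leqp Hq.
  apply Hno. eauto.
Qed.

Lemma Fimp_intro (A B : P -> Prop) p : (forall q, le q p -> A q -> B q) -> Fimp le A B p.
Proof. intros H q leqp [HA HnB]. exact (HnB q (poset_refl q) (H q leqp HA)). Qed.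

Lemma Fimp_elim (A B : P -> Prop) p : Fimp le A B p -> A p -> exists q, le q p /\ B q.
Proof.
  intros H HA. apply NNPP. intro Hno. apply (H p (poset_refl p)). split; [exact HA |].
  intros q leqp HB. apply Hno. eauto.
Qed.

Lemma not_Fimp (A B : P -> Prop) p : ~ Fimp le A B p -> exists q, le q p /\ A q /\ Fnot le B q.
Proof.
  intro H. apply NNPP. intro Hno. apply H. intros q leqp [HA HnB]. apply Hno. eauto.
Qed.

Definition ground_name {T} (X : T -> Prop) : name P T := fun t _ => X t.

Lemma Fin_ground_name {T} (X : T -> Prop) t p : Fin le (ground_name X) t p <-> X t.
Proof.
  split.
  - intro H. destruct (H p (poset_refl p)) as [r [_ [s [Ht _]]]]. exact Ht.
  - intros Ht q _. exists q. split; [apply poset_refl |].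
    exists q. split; [exact Ht | apply poset_refl].
Qed.

Lemma Fclub_ground_name {W} (lt : W -> W -> Prop) (D : W -> Prop) p :
  club lt D -> Fclub lt le (ground_name D) p.
Proof.
  intros [Hunb Hcl]. split.
  - intro b. apply Fex_intro. intros q _. destruct (Hunb b) as [g [ltbg Dg]].
    exists g, q. split; [apply poset_refl |]. split; [exact ltbg |].
    apply Fin_ground_name. exact Dg.
  - intro a. apply Fimp_intro. intros q _ Hlim. apply Fimp_intro. intros q' _ Hcof.
    apply Fin_ground_name. apply Hcl; [exact Hlim |]. intros b ltba.
    destruct (Fimp_elim _ _ _ (Hcof b) ltba) as [q2 [_ Hq2]].
    destruct (Fex_elim _ _ Hq2) as [g [q3 [_ [[ltbg ltga] Hg]]]].
    apply Fin_ground_name in Hg. eauto.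
Qed.

Lemma not_Fstationary {W} (lt : W -> W -> Prop) (E : name P W) p :
  ~ Fstationary lt le E p ->
  exists C q, le q p /\ Fclub lt le C q /\
    forall q' a, le q' q -> Fin le C a q' -> Fin le E a q' -> False.
Proof.
  intro H. destruct (not_all_ex_not _ _ H) as [C HC].
  destruct (not_Fimp _ _ _ HC) as [q [leqp [Hclub Hdisj]]].
  exists C, q. split; [exact leqp | split; [exact Hclub |]].
  intros q' a leq'q HCa HEa. apply (Hdisj q' leq'q). apply Fex_intro. intros r lerq'.
  exists a, r. split; [apply poset_refl |]. split; eapply Fin_down; eauto.
Qed.

Definition pair_name {T} (E : T -> Prop) (r : T -> P) : name P T := fun a s => E a /\ s = r a.

Lemma Fin_pair_name {T} (E : T -> Prop) r a p : E a -> le p (r a) -> Fin le (pair_name E r) a p.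
Proof.
  intros Ea lepr q leqp. exists q. split; [apply poset_refl |].
  exists (r a). split; [split; auto | eauto using poset_trans].
Qed.

Lemma Fin_pair_name_inv {T} (E : T -> Prop) r a p : Fin le (pair_name E r) a p -> E a.
Proof. intro H. destruct (H p (poset_refl p)) as [q [_ [s [[Ea _] _]]]]. exact Ea. Qed.

Lemma Fsubset_pair_name {T} (E : T -> Prop) r (X : name P T) p :
  (forall a, E a -> Fin le X a (r a)) -> Fsubset le (pair_name E r) X p.
Proof.
  intros HX a. apply Fimp_intro. intros q _ Hin q' leq'q.
  destruct (Hin q' leq'q) as [r0 [ler0q' [s [[Ea ->] ler0s]]]].
  destruct (HX a Ea r0 ler0s) as [r1 [ler1r0 Hr1]]. exists r1. eauto using poset_trans.
Qed.

End Forcing.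

Section StatK.

Context {W : Type} (lt : W -> W -> Prop) {P : Type} (le : P -> P -> Prop).
Hypotheses (Hom : is_omega1 lt) (Hp : poset le) (HK : stat_K lt le).

Let le_refl := poset_refl le Hp.
Let le_trans := poset_trans le Hp.
Let lt_trans := omega1_trans lt Hom.

Definition meets_between (C : name P W) (p : P) (b d : W) : Prop :=
  forall q, le q p -> exists r g, le r q /\ lt b g /\ lt g d /\ Fin le C g r.

(* Otherwise some [q_d <= p] would force [C] to avoid [(b, d)] for every [d];
   extending each [q_d] to decide a point [g_d > b] of [C], two compatible
   such conditions with [g_d < d'] contradict each other. *)
Lemma Fclub_meets_between (C : name P W) p b :
  Fclub lt le C p -> exists d, meets_between C p b d.
Proof.
  intros [Hunb _]. apply NNPP. intro Hno.
  assert (Havoid : forall d, exists q, le q p /\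
            forall r g, le r q -> lt b g -> lt g d -> ~ Fin le C g r).
  { intro d. apply NNPP. intro H. apply Hno. exists d. intros q leqp.
    apply NNPP. intro H'. apply H. exists q. split; [exact leqp |].
    intros r g lerq ltbg ltgd HCg. apply H'. eauto 7. }
  destruct (functional_choice _ Havoid) as [q Hq].
  assert (Hdecide : forall d, exists r, le r (q d) /\ exists g, lt b g /\ Fin le C g r).
  { intro d. destruct (Hq d) as [leqp _].
    destruct (Fex_elim le Hp _ _ (Fnot_down le Hp _ _ _ (Hunb b) leqp))
      as [g [r [lerq [ltbg HCg]]]].
    eauto. }
  destruct (functional_choice _ Hdecide) as [r Hr].
  destruct (HK _ (stationary_full lt Hom) r) as [S [_ [HS Hlinked]]].
  destruct (stationary_nonempty lt Hom S HS) as [d Sd].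
  destruct (Hr d) as [lerq [g [ltbg HCg]]].
  destruct (stationary_unbounded lt Hom S HS g) as [d' [ltgd' Sd']].
  destruct (Hlinked d d' Sd Sd') as [u [leur leur']].
  apply (proj2 (Hq d') u g); [| exact ltbg | exact ltgd' | exact (Fin_down le Hp _ _ _ _ HCg leur)].
  exact (le_trans _ _ _ leur' (proj1 (Hr d'))).
Qed.

Lemma Fclub_limit_in (C : name P W) p d :
  Fclub lt le C p -> is_limit lt d -> (forall b, lt b d -> meets_between C p b d) ->
  Fin le C d p.
Proof.
  intros [_ Hcl] Hlim Hmeets. apply (Fin_stable le Hp). intros q leqp Hout.
  destruct (Fimp_elim le Hp _ _ _ (Fnot_down le Hp _ _ _ (Hcl d) leqp) Hlim)
    as [q' [leq'q Himp]].
  apply (Himp q' (le_refl q')). split; [| exact (Fnot_down le Hp _ _ _ Hout leq'q)].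
  intro b. apply (Fimp_intro le Hp). intros q2 leq2q' ltbd. apply (Fex_intro le).
  intros q3 leq3q2.
  destruct (Hmeets b ltbd q3) as [r [g [lerq3 [ltbg [ltgd HCg]]]]].
  { eauto using le_trans. }
  exists g, r. split; [exact lerq3 | split; [split; assumption | exact HCg]].
Qed.

Lemma Fclub_contains_club (C : name P W) p :
  Fclub lt le C p -> exists D, club lt D /\ forall d, D d -> Fin le C d p.
Proof.
  intro Hclub.
  exists (fun d => is_limit lt d /\ forall b, lt b d -> meets_between C p b d). split.
  - apply (club_of_closure_points lt Hom).
    + intro b. exact (Fclub_meets_between C p b Hclub).
    + intros b d Hm. destruct (Hm p (le_refl p)) as [r [g [_ [ltbg [ltgd _]]]]].
      eauto using lt_trans.
    + intros b d d' Hm ltdd' q leqp. destruct (Hm q leqp) as [r [g [lerq [ltbg [ltgd HCg]]]]].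
      exists r, g. eauto using lt_trans.
    + intros b b' d Hm ltb'b q leqp.
      destruct (Hm q leqp) as [r [g [lerq [ltbg [ltgd HCg]]]]].
      exists r, g. eauto using lt_trans.
  - intros d [Hlim Hmeets]. exact (Fclub_limit_in C p d Hclub Hlim Hmeets).
Qed.

Lemma Fstationary_pair_name (E : W -> Prop) (r : W -> P) :
  stationary lt E -> exists a q, E a /\ le q (r a) /\ Fstationary lt le (pair_name E r) q.
Proof.
  intro HE. apply NNPP. intro Hno.
  assert (Hkill : forall a, E a -> exists Cq : name P W * P,
      le (snd Cq) (r a) /\ Fclub lt le (fst Cq) (snd Cq) /\
      forall q' b, le q' (snd Cq) -> Fin le (fst Cq) b q' ->
        Fin le (pair_name E r) b q' -> False).
  { intros a Ea. destruct (not_Fstationary le Hp lt (pair_name E r) (r a)) as [C [q Hq]].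
    { intro H. apply Hno. exists a, (r a). auto using le_refl. }
    exists (C, q). exact Hq. }
  destruct (stationary_nonempty lt Hom E HE) as [a0 _].
  destruct (guarded_choice E _ (ground_name (fun _ => True), r a0) Hkill) as [k Hk].
  destruct (HK E HE (fun a => snd (k a))) as [S [SE [HS Hlinked]]].
  destruct (stationary_nonempty lt Hom S HS) as [a Sa].
  destruct (Hk a (SE a Sa)) as [_ [Hclub Hdisj]].
  destruct (Fclub_contains_club _ _ Hclub) as [D [HD HDC]].
  destruct (HS D HD) as [b [Db Sb]].
  destruct (Hlinked a b Sa Sb) as [u [leua leub]].
  apply (Hdisj u b leua).
  - exact (Fin_down le Hp _ _ _ _ (HDC b Db) leua).
  - apply (Fin_pair_name le Hp); [exact (SE b Sb) |].
    exact (le_trans _ _ _ leub (proj1 (Hk b (SE b Sb)))).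
Qed.

End StatK.

Section Uniformization.

Context {W : Type} (lt : W -> W -> Prop) {P : Type} (le : P -> P -> Prop).
Hypothesis Hp : poset le.
Variables (l : W -> nat -> W) (c : W -> nat -> nat).

Definition graph {A B} (k : A -> B) (x : A * B) : Prop := snd x = k (fst x).

Lemma Funiformizes_ground (E : W -> Prop) (E' : name P W) (k : W -> nat) p :
  (forall a q, Fin le E' a q -> E a) ->
  uniformized_on l c (fun a => E a /\ is_limit lt a) k ->
  Funiformizes lt le l c E' (ground_name (graph k)) p.
Proof.
  intros HE' Hk. split; [| split].
  - intro a. apply (Fimp_intro le Hp). intros q _ _. apply (Fex_intro le). intros q' _.
    exists (k a), q'. split; [apply (poset_refl le Hp) |]. apply (Fin_ground_name le Hp). reflexivity.
  - intros a n n'. apply (Fimp_intro le Hp). intros q _ [_ [Hn Hn']].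
    apply (Fin_ground_name le Hp) in Hn, Hn'. unfold graph in *. simpl in *. congruence.
  - intros a b n n' m m'. apply (Fimp_intro le Hp).
    intros q _ [[Ea Hla] [[Eb Hlb] [[Hn Hn'] [lenm [len'm' Hl]]]]].
    apply (Fin_ground_name le Hp) in Hn, Hn'. unfold graph in *. simpl in *. subst n n'.
    apply (Hk a b m m'); eauto.
Qed.

Lemma Fstationary_possible_members (E : name P W) p :
  Fstationary lt le E p -> stationary lt (fun a => exists q, le q p /\ Fin le E a q).
Proof.
  intros HE D HD.
  destruct (Fimp_elim le Hp _ _ _ (HE (ground_name D)) (Fclub_ground_name le Hp lt D p HD))
    as [q [leqp Hex]].
  destruct (Fex_elim le Hp _ _ Hex) as [a [q' [leq'q [HDa HEa]]]].
  apply (Fin_ground_name le Hp) in HDa. exists a. split; [exact HDa |].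
  exists q'. split; [exact (poset_trans le Hp _ _ _ leq'q leqp) | exact HEa].
Qed.

Hypotheses (Hom : is_omega1 lt) (HK : stat_K lt le) (HSS : SS_uniformizable lt l c).

Lemma Fstationary_uniformizable_subset (E : name P W) p :
  Fstationary lt le E p ->
  exists E' q, le q p /\
    Fand (Fsubset le E' E)
      (Fand (Fstationary lt le E')
        (Fex le (fun K : name P (W * nat) => Funiformizes lt le l c E' K))) q.
Proof.
  intro HE.
  destruct (HSS _ (Fstationary_possible_members E p HE)) as [E1 [E1E [HE1 [k Hk]]]].
  destruct (guarded_choice E1 (fun a q => le q p /\ Fin le E a q) p) as [r Hr].
  { intros a E1a. exact (E1E a E1a). }
  destruct (Fstationary_pair_name lt le Hom Hp HK E1 r HE1) as [a [q [E1a [leqr Hq]]]].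
  exists (pair_name E1 r), q.
  split; [exact (poset_trans le Hp _ _ _ leqr (proj1 (Hr a E1a))) |].
  split; [apply (Fsubset_pair_name le Hp); intros b E1b; exact (proj2 (Hr b E1b)) |].
  split; [exact Hq |].
  apply (Fex_intro le). intros q' _. exists (ground_name (graph k)), q'.
  split; [apply (poset_refl le Hp) |].
  apply Funiformizes_ground with (E := E1); [| exact Hk].
  exact (Fin_pair_name_inv le Hp E1 r).
Qed.

End Uniformization.

Theorem lemma4 (W : Type) (lt : W -> W -> Prop) (P : Type) (le : P -> P -> Prop)
  (l : W -> nat -> W) (c : W -> nat -> nat) :
  is_omega1 lt ->
  ladder_system lt l ->
  SS_uniformizable lt l c ->
  poset le ->
  stat_K lt le ->
  forall p : P, F_SS_uniformizable lt le l c p.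
Proof.
  intros Hom _ HSS Hp HK p E. apply (Fimp_intro le Hp). intros q _ HE.
  apply (Fex_intro le). intros q' leq'q.
  exact (Fstationary_uniformizable_subset lt le Hp l c Hom HK HSS E q'
           (Fstationary_down le Hp lt E q q' HE leq'q)).
Qed.
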